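(* Let $G$ be a finitely generated nilpotent group. There is a first-order formula $\psi(x)$ in the language of groups such that for every group $H$ with $H\equiv G$, $\psi$ defines $Is(H')$ in $H$.
   Context: $Is(H')=\{x\in H:\ x^k\in H'\text{ for some integer }k\ge1\}$, where $H'$ is the commutator subgroup of $H$. *)

From Stdlib Require Import Arith List.

Set Implicit Arguments.

Record Group := {
  carrier :> Type;
  gmul : carrier -> carrier -> carrier;
  gone : carrier;
  ginv : carrier -> carrier;
  gmulA : forall x y z, gmul x (gmul y z) = gmul (gmul x y) z;
  gmul1 : forall x, gmul gone x = x;
  gmulV : forall x, gmul (ginv x) x = gone
}.

Section GroupNotions.
Variable G : Group.

Inductive gen (S : G -> Prop) : G -> Prop :=
| gen_base : forall x, S x -> gen S x
| gen_one : gen S (gone G)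
| gen_mul : forall x y, gen S x -> gen S y -> gen S (gmul G x y)
| gen_inv : forall x, gen S x -> gen S (ginv G x).

Definition comm (x y : G) : G :=
  gmul G (gmul G (ginv G x) (ginv G y)) (gmul G x y).

Definition derived : G -> Prop :=
  gen (fun z => exists x y, z = comm x y).

Fixpoint gpow (x : G) (n : nat) : G :=
  match n with 0 => gone G | S m => gmul G x (gpow x m) end.

Definition Is_derived (x : G) : Prop :=
  exists k, 1 <= k /\ derived (gpow x k).

Fixpoint lcs (i : nat) : G -> Prop :=
  match i with
  | 0 => fun _ => True
  | S j => gen (fun z => exists a g, lcs j a /\ z = comm a g)
  end.

Definition nilpotent : Prop :=
  exists c, forall x, lcs c x -> x = gone G.

Definition finitely_generated : Prop :=
  exists l : list G, forall x, gen (fun y => In y l) x.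

End GroupNotions.

Inductive term :=
| tvar : nat -> term
| tone : term
| tmul : term -> term -> term
| tinv : term -> term.

Inductive formula :=
| fEq : term -> term -> formula
| fFalse : formula
| fNot : formula -> formula
| fAnd : formula -> formula -> formula
| fOr : formula -> formula -> formula
| fImp : formula -> formula -> formula
| fAll : nat -> formula -> formula
| fEx : nat -> formula -> formula.

Fixpoint tfree (n : nat) (t : term) : bool :=
  match t with
  | tvar m => Nat.eqb n m
  | tone => false
  | tmul a b => tfree n a || tfree n b
  | tinv a => tfree n a
  end.

Fixpoint free_in (n : nat) (f : formula) : bool :=
  match f with
  | fEq a b => tfree n a || tfree n b
  | fFalse => false
  | fNot g => free_in n g
  | fAnd g h | fOr g h | fImp g h => free_in n g || free_in n h
  | fAll m g | fEx m g => negb (Nat.eqb n m) && free_in n g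
  end.

Definition sentence (f : formula) : Prop := forall n, free_in n f = false.

Section Semantics.
Variable G : Group.

Fixpoint teval (env : nat -> G) (t : term) : G :=
  match t with
  | tvar m => env m
  | tone => gone G
  | tmul a b => gmul G (teval env a) (teval env b)
  | tinv a => ginv G (teval env a)
  end.

Definition upd (env : nat -> G) (m : nat) (v : G) : nat -> G :=
  fun k => if Nat.eqb k m then v else env k.

Fixpoint sat (env : nat -> G) (f : formula) : Prop :=
  match f with
  | fEq a b => teval env a = teval env b
  | fFalse => False
  | fNot g => ~ sat env g
  | fAnd g h => sat env g /\ sat env h
  | fOr g h => sat env g \/ sat env h
  | fImp g h => sat env g -> sat env h
  | fAll m g => forall v : G, sat (upd env m v) g
  | fEx m g => exists v : G, sat (upd env m v) g
  end.

End Semantics.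

Definition elem_equiv (G H : Group) : Prop :=
  forall f, sentence f ->
    ((forall e : nat -> G, @sat G e f) <-> (forall e : nat -> H, @sat H e f)).

Definition unary_formula (psi : formula) : Prop :=
  forall n, n <> 0 -> free_in n psi = false.

Definition defines (H : Group) (psi : formula) (A : H -> Prop) : Prop :=
  forall env : nat -> H, @sat H env psi <-> A (env 0).

(** Two finiteness properties
    of [G] make [Is(H')] definable uniformly in every [H] elementarily
    equivalent to [G]:
    - finite width: for some [K], every element of [G'] is a product of [K]
      commutators.  Descend the lower central series: modulo [gamma_(j+2)]
      the commutator map [G x gamma_j -> gamma_(j+1)] is central and
      bimultiplicative, so each layer is a product of the commutators
      [[x_i, u_i]] with [x_i] running over a generating list;
    - bounded torsion: for some [e >= 1], if [x^k] lies in [G'] for some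
      [k >= 1] then so does [x^e] (torsion of the finitely generated abelian
      group [G/G'] has bounded exponent; induction on the generators).
    Write [Cw K x] for "[x] is a product of [K] commutators", an existential
    formula.  In [G], [G' = Cw (K+1)], so the sentences "[Cw (K+1)] is closed
    under multiplication" and, for each [k >= 1], "[Cw (K+1) (x^k)] implies
    [Cw (K+1) (x^e)]" hold in [G], hence in [H].  In [H] the first gives
    [H' = Cw (K+1)], and the second shows that [psi(x) := Cw (K+1) (x^e)]
    defines [Is(H')]. *)

From Stdlib Require Import Arith List Lia Classical Setoid Morphisms FunctionalExtensionality.

#[global] Arguments gen {G} S _.
#[global] Arguments comm {G} x y.
#[global] Arguments lcs {G} i _.
#[global] Arguments derived {G} _.
#[global] Arguments gpow {G} x n.
Infix "**" := (gmul _) (at level 40, left associativity).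
Notation "x ^-1" := (ginv _ x) (at level 3, left associativity, format "x ^-1").

Lemma g_assoc (G : Group) (x y z : G) : x ** y ** z = x ** (y ** z).
Proof. now rewrite gmulA. Qed.
Lemma g_1l (G : Group) (x : G) : gone G ** x = x. Proof. apply gmul1. Qed.
Lemma g_Vl (G : Group) (x : G) : x^-1 ** x = gone G. Proof. apply gmulV. Qed.
Lemma g_Vr (G : Group) (x : G) : x ** x^-1 = gone G.
Proof.
  rewrite <- (gmul1 G (x ** x^-1)), <- (gmulV G (x^-1)) at 1.
  rewrite <- gmulA, (gmulA G (x^-1)), gmulV, gmul1. apply gmulV.
Qed.
Lemma g_1r (G : Group) (x : G) : x ** gone G = x.
Proof. now rewrite <- (gmulV G x), gmulA, g_Vr, gmul1. Qed.
Lemma g_Vlc (G : Group) (x y : G) : x^-1 ** (x ** y) = y.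
Proof. now rewrite gmulA, gmulV, gmul1. Qed.
Lemma g_Vrc (G : Group) (x y : G) : x ** (x^-1 ** y) = y.
Proof. now rewrite gmulA, g_Vr, gmul1. Qed.
Lemma g_inv_uniq (G : Group) (x y : G) : x ** y = gone G -> y = x^-1.
Proof. intro H. rewrite <- (g_Vlc G x y), H. apply g_1r. Qed.
Lemma g_VV (G : Group) (x : G) : (x^-1)^-1 = x.
Proof. symmetry. apply g_inv_uniq, g_Vl. Qed.
Lemma g_V1 (G : Group) : (gone G)^-1 = gone G.
Proof. symmetry. apply g_inv_uniq, gmul1. Qed.
Lemma g_VM (G : Group) (x y : G) : (x ** y)^-1 = y^-1 ** x^-1.
Proof. symmetry. apply g_inv_uniq. rewrite g_assoc, g_Vrc. apply g_Vr. Qed.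

Global Hint Rewrite g_assoc g_1l g_1r g_Vl g_Vr g_Vlc g_Vrc g_VV g_V1 g_VM : gsimp.
Ltac gs := autorewrite with gsimp.
Ltac gs_in H := autorewrite with gsimp in H.

Class normal {G : Group} (P : G -> Prop) : Prop := {
  normal_one : P (gone G);
  normal_mul : forall x y, P x -> P y -> P (x ** y);
  normal_inv : forall x, P x -> P (x^-1);
  normal_conj : forall x g, P x -> P (g^-1 ** x ** g) }.

Definition cong {G : Group} (P : G -> Prop) (x y : G) : Prop := P (x^-1 ** y).

Section Congruence.
Context {G : Group} {P : G -> Prop} `{HP : normal G P}.

#[global] Instance cong_equiv : Equivalence (cong P).
Proof.
  split; unfold cong.
  - intro x. gs. apply normal_one.
  - intros x y H. apply normal_inv in H. now gs_in H.
  - intros x y z H1 H2. pose proof (normal_mul _ _ H1 H2) as H. now gs_in H.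
Qed.

#[global] Instance gmul_cong : Proper (cong P ==> cong P ==> cong P) (gmul G).
Proof.
  intros x x' Hx y y' Hy. unfold cong in *.
  pose proof (normal_mul _ _ (normal_conj _ y Hx) Hy) as H. gs_in H. now gs.
Qed.

#[global] Instance ginv_cong : Proper (cong P ==> cong P) (ginv G).
Proof.
  intros x y H. unfold cong in *.
  pose proof (normal_conj _ (y^-1) (normal_inv _ H)) as H'. gs_in H'. now gs.
Qed.

Lemma cong_one x : cong P x (gone G) <-> P x.
Proof.
  unfold cong. gs. split; intro H; apply normal_inv in H; now gs_in H.
Qed.

#[global] Instance mem_cong : Proper (cong P ==> iff) P.
Proof.
  intros x y Hxy. unfold cong in Hxy. split; intro H.
  - pose proof (normal_mul _ _ H Hxy) as H'. now gs_in H'.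
  - pose proof (normal_mul _ _ H (normal_inv _ Hxy)) as H'. now gs_in H'.
Qed.

Lemma cong_cancel_l z x y : cong P (z ** x) (z ** y) -> cong P x y.
Proof. unfold cong. now gs. Qed.
Lemma cong_cancel_r z x y : cong P (x ** z) (y ** z) -> cong P x y.
Proof.
  intro H. rewrite <- (g_1r G x), <- (g_1r G y), <- (g_Vr G z), <- !g_assoc.
  now rewrite H.
Qed.

Lemma cong_swap x y : P (comm y x) -> cong P (x ** y) (y ** x).
Proof. unfold cong, comm. now gs. Qed.

End Congruence.

Lemma gen_ind {G : Group} (S Q : G -> Prop) :
  (forall x, S x -> Q x) -> Q (gone G) -> (forall x y, Q x -> Q y -> Q (x ** y)) ->
  (forall x, Q x -> Q (x^-1)) -> forall x, gen S x -> Q x.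
Proof. intros HS H1 HM HV x Hx. induction Hx; auto. Qed.

Lemma gen_mono {G : Group} (S T : G -> Prop) :
  (forall x, S x -> T x) -> forall x, gen S x -> gen T x.
Proof. intros HST. apply gen_ind; auto using gen_base, gen_one, gen_mul, gen_inv. Qed.

Lemma gen_normal {G : Group} (S : G -> Prop) :
  (forall x g, S x -> S (g^-1 ** x ** g)) -> normal (gen S).
Proof.
  intros HJ. split; [apply gen_one | apply gen_mul | apply gen_inv |].
  intros x g Hx. induction Hx.
  - apply gen_base; auto.
  - replace (g^-1 ** gone G ** g) with (gone G) by (gs; reflexivity). apply gen_one.
  - replace (g^-1 ** (x ** y) ** g) with ((g^-1 ** x ** g) ** (g^-1 ** y ** g))
      by (gs; reflexivity). now apply gen_mul.
  - replace (g^-1 ** x^-1 ** g) with ((g^-1 ** x ** g)^-1) by (gs; reflexivity).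
    now apply gen_inv.
Qed.

Section Commutators.
Context {G : Group}.
Implicit Types a b g h x y z : G.

Lemma comm_conj a b g : g^-1 ** comm a b ** g = comm (g^-1 ** a ** g) (g^-1 ** b ** g).
Proof. unfold comm. gs. reflexivity. Qed.
Lemma comm_inv a b : (comm a b)^-1 = comm b a.
Proof. unfold comm. gs. reflexivity. Qed.
Lemma comm_1l a : comm (gone G) a = gone G.
Proof. unfold comm. gs. reflexivity. Qed.
Lemma comm_1r a : comm a (gone G) = gone G.
Proof. unfold comm. gs. reflexivity. Qed.
Lemma comm_mul_l y z a : comm (y ** z) a = comm y a ** comm (comm y a) z ** comm z a.
Proof. unfold comm. gs. reflexivity. Qed.
Lemma comm_mul_r x y z : comm x (y ** z) = comm x z ** comm x y ** comm (comm x y) z.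
Proof. unfold comm. gs. reflexivity. Qed.
Lemma comm_inv_l h a : comm (h^-1) a = h ** (comm h a)^-1 ** h^-1.
Proof. unfold comm. gs. reflexivity. Qed.
Lemma comm_inv_r g a : comm g (a^-1) = a ** (comm g a)^-1 ** a^-1.
Proof. unfold comm. gs. reflexivity. Qed.
End Commutators.

#[global] Instance lcs_normal (G : Group) (i : nat) : normal (@lcs G i).
Proof.
  induction i as [|i IH].
  - split; simpl; auto.
  - apply gen_normal. intros x g [a [b [Ha ->]]].
    exists (g^-1 ** a ** g), (g^-1 ** b ** g). split.
    + now apply normal_conj.
    + apply comm_conj.
Qed.

#[global] Instance derived_normal (G : Group) : normal (@derived G).
Proof.
  apply gen_normal. intros x g [a [b ->]].
  exists (g^-1 ** a ** g), (g^-1 ** b ** g). apply comm_conj.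
Qed.

Lemma derived_lcs1 (G : Group) (x : G) : derived x <-> lcs 1 x.
Proof.
  split; apply gen_mono.
  - intros z [a [b ->]]. exists a, b. auto.
  - intros z [a [b [_ ->]]]. exists a, b. auto.
Qed.

Lemma lcs_comm_l (G : Group) i (a g : G) : lcs i a -> lcs (S i) (comm a g).
Proof. intros H. apply gen_base. exists a, g. auto. Qed.
Lemma lcs_comm_r (G : Group) i (a g : G) : lcs i a -> lcs (S i) (comm g a).
Proof. intros H. rewrite <- comm_inv. apply normal_inv. now apply lcs_comm_l. Qed.

Fixpoint comm_prod {G : Group} (ps : list (G * G)) : G :=
  match ps with nil => gone G | (a, b) :: ps' => comm a b ** comm_prod ps' end.

Definition Cw {G : Group} (K : nat) (z : G) : Prop :=
  exists ps : list (G * G), length ps = K /\ z = comm_prod ps.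

Section CommutatorProducts.
Context {G : Group}.

Lemma comm_prod_app (ps qs : list (G * G)) :
  comm_prod (ps ++ qs) = comm_prod ps ** comm_prod qs.
Proof. induction ps as [|[a b] ps IH]; simpl; rewrite ?IH; gs; reflexivity. Qed.

Lemma Cw_mul K1 K2 (z1 z2 : G) : Cw K1 z1 -> Cw K2 z2 -> Cw (K1 + K2) (z1 ** z2).
Proof.
  intros [ps [L1 ->]] [qs [L2 ->]]. exists (ps ++ qs).
  rewrite length_app, comm_prod_app. auto.
Qed.

(** The inverse of [[a1,b1]...[aK,bK]] is [[bK,aK]...[b1,a1]]. *)
Lemma Cw_inv K (z : G) : Cw K z -> Cw K (z^-1).
Proof.
  intros [ps [L ->]]. exists (rev (map (fun p => (snd p, fst p)) ps)).
  rewrite length_rev, length_map. split; auto. clear L.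
  induction ps as [|[a b] ps IH]; simpl; [apply g_V1|].
  rewrite comm_prod_app, <- IH, g_VM. simpl. rewrite comm_inv. gs. reflexivity.
Qed.

Lemma Cw_one K : Cw K (gone G).
Proof.
  exists (repeat (gone G, gone G) K). rewrite repeat_length. split; auto.
  induction K as [|K IH]; simpl; auto. rewrite <- IH, comm_1l. gs. reflexivity.
Qed.

Lemma Cw_S K (z : G) : Cw K z -> Cw (S K) z.
Proof. intro H. rewrite <- (g_1l G z). apply (Cw_mul 1 K); [apply Cw_one | exact H]. Qed.

Lemma Cw_comm K (a b : G) : 1 <= K -> Cw K (comm a b).
Proof.
  intros HK. replace (comm a b) with (comm a b ** gone G) by apply g_1r.
  replace K with (1 + (K - 1)) by lia. apply Cw_mul, Cw_one.
  exists ((a, b) :: nil). simpl. gs. auto.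
Qed.

Lemma Cw_derived K (z : G) : Cw K z -> derived z.
Proof.
  intros [ps [_ ->]]. induction ps as [|[a b] ps IH]; simpl.
  - apply gen_one.
  - apply gen_mul; auto. apply gen_base. eauto.
Qed.

Lemma derived_Cw_of_mul_closed K : 1 <= K ->
  (forall x y : G, Cw K x -> Cw K y -> Cw K (x ** y)) ->
  forall z : G, derived z <-> Cw K z.
Proof.
  intros HK Hmul z. split; [|apply Cw_derived].
  apply gen_ind; auto using Cw_one, Cw_inv.
  intros w [a [b ->]]. now apply Cw_comm.
Qed.

End CommutatorProducts.

Fixpoint layer_prod {G : Group} (l : list G) (u : nat -> G) : G :=
  match l with
  | nil => gone G
  | x :: l' => comm x (u 0) ** layer_prod l' (fun k => u (S k))
  end.

Lemma layer_prod_Cw {G : Group} (l : list G) u : Cw (length l) (layer_prod l u).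
Proof.
  revert u; induction l as [|x l IH]; intro u; simpl.
  - exists nil. auto.
  - destruct (IH (fun k => u (S k))) as [ps [L E]].
    exists ((x, u 0) :: ps). simpl. rewrite E. auto.
Qed.

Lemma layer_prod_one {G : Group} (l : list G) : layer_prod l (fun _ => gone G) = gone G.
Proof. induction l; simpl; auto. rewrite IHl, comm_1r. apply g_1l. Qed.

(** One layer of the lower central series: modulo [gamma_(j+2)], every element
    of [gamma_(j+1)] is a product [[l_1,u_1]...[l_n,u_n]] with [u_i] in
    [gamma_j], where [l] generates [G].  The reason is that, modulo
    [gamma_(j+2)], the commutator map [G x gamma_j -> gamma_(j+1)] is central
    and bimultiplicative. *)
Section Layer.
Context {G : Group} (j : nat).
Notation N := (@lcs G (S (S j))).
Notation "x ~ y" := (cong N x y) (at level 70).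

Lemma layer_central (c g : G) : lcs (S j) c -> c ** g ~ g ** c.
Proof. intro H. apply cong_swap. now apply lcs_comm_r. Qed.

Lemma layer_conj (c g : G) : lcs (S j) c -> g ** c ** g^-1 ~ c.
Proof. intro H. rewrite <- (layer_central c g H). gs. reflexivity. Qed.

Lemma comm_inv_layer (g a : G) : lcs j a -> (comm g a)^-1 ~ comm g (a^-1).
Proof.
  intro Ha. rewrite comm_inv_r, layer_conj; [reflexivity|].
  apply normal_inv. now apply lcs_comm_r.
Qed.

Definition in_layer (u : nat -> G) : Prop := forall k, lcs j (u k).

Lemma layer_prod_lcs (l : list G) u : in_layer u -> lcs (S j) (layer_prod l u).
Proof.
  revert u; induction l as [|x l IH]; intros u Hu; cbn [layer_prod].
  - apply normal_one.
  - apply normal_mul; [now apply lcs_comm_r | apply IH; intro; apply Hu].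
Qed.

Lemma layer_prod_mul (l : list G) u1 u2 : in_layer u1 -> in_layer u2 ->
  layer_prod l u1 ** layer_prod l u2 ~ layer_prod l (fun k => u2 k ** u1 k).
Proof.
  revert u1 u2; induction l as [|x l IH]; intros u1 u2 H1 H2; cbn [layer_prod].
  - gs. reflexivity.
  - rewrite <- (IH (fun k => u1 (S k)) (fun k => u2 (S k))) by (intro; auto).
    assert (Hc : comm (comm x (u2 0)) (u1 0) ~ gone G)
      by (apply cong_one, lcs_comm_l, lcs_comm_r, H2).
    rewrite comm_mul_r, Hc, g_1r, !g_assoc.
    apply gmul_cong; [reflexivity|]. rewrite <- !g_assoc.
    apply gmul_cong; [|reflexivity]. apply layer_central, layer_prod_lcs.
    intro; apply H1.
Qed.

Lemma layer_prod_inv (l : list G) u : in_layer u ->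
  (layer_prod l u)^-1 ~ layer_prod l (fun k => (u k)^-1).
Proof.
  revert u; induction l as [|x l IH]; intros u Hu; cbn [layer_prod].
  - rewrite g_V1. reflexivity.
  - assert (HR : lcs (S j) ((layer_prod l (fun k => u (S k)))^-1))
      by (apply normal_inv, layer_prod_lcs; intro; apply Hu).
    rewrite g_VM, (layer_central _ _ HR), comm_inv_layer, IH by (auto; intro; apply Hu).
    reflexivity.
Qed.

Definition layer_rep (l : list G) (z : G) : Prop :=
  exists u, in_layer u /\ layer_prod l u ~ z.

Lemma layer_rep_cong l z z' : layer_rep l z -> z ~ z' -> layer_rep l z'.
Proof. intros [u [Hu H]] H'. exists u. split; auto. now rewrite H. Qed.

Lemma layer_rep_one l : layer_rep l (gone G).
Proof.
  exists (fun _ => gone G). split; [intro; apply normal_one|].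
  rewrite layer_prod_one. reflexivity.
Qed.

Lemma layer_rep_mul l z1 z2 : layer_rep l z1 -> layer_rep l z2 -> layer_rep l (z1 ** z2).
Proof.
  intros [u1 [Hu1 H1]] [u2 [Hu2 H2]]. exists (fun k => u2 k ** u1 k). split.
  - intro k. apply normal_mul; auto.
  - rewrite <- layer_prod_mul, H1, H2 by auto. reflexivity.
Qed.

Lemma layer_rep_inv l z : layer_rep l z -> layer_rep l (z^-1).
Proof.
  intros [u [Hu H]]. exists (fun k => (u k)^-1). split.
  - intro k. apply normal_inv; auto.
  - rewrite <- layer_prod_inv, H by auto. reflexivity.
Qed.

Lemma layer_rep_basic (l : list G) x a : In x l -> lcs j a -> layer_rep l (comm x a).
Proof.
  revert x a; induction l as [|y l IH]; intros x a Hin Ha; [destruct Hin|].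
  destruct Hin as [<-|Hin].
  - exists (fun k => match k with 0 => a | _ => gone G end). split.
    + intros [|k]; auto. apply normal_one.
    + cbn [layer_prod]. rewrite layer_prod_one. gs. reflexivity.
  - destruct (IH x a Hin Ha) as [u [Hu E]].
    exists (fun k => match k with 0 => gone G | S k => u k end). split.
    + intros [|k]; auto. apply normal_one.
    + cbn [layer_prod]. now rewrite comm_1r, g_1l.
Qed.

(** Bimultiplicativity in the first argument extends [layer_rep_basic] to all
    [g] in the subgroup generated by [l]. *)
Lemma layer_rep_comm (l : list G) g : gen (fun y => In y l) g ->
  forall a, lcs j a -> layer_rep l (comm g a).
Proof.
  induction 1 as [x Hx| |x y _ IH1 _ IH2|h _ IH]; intros a Ha.
  - now apply layer_rep_basic.
  - rewrite comm_1l. apply layer_rep_one.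
  - rewrite comm_mul_l. apply layer_rep_cong with (comm x a ** comm y a).
    + apply layer_rep_mul; auto.
    + assert (Hc : comm (comm x a) y ~ gone G)
        by (apply cong_one, lcs_comm_l, lcs_comm_r, Ha).
      rewrite Hc, g_1r. reflexivity.
  - rewrite comm_inv_l. apply layer_rep_cong with (comm h (a^-1)).
    + apply IH. now apply normal_inv.
    + rewrite layer_conj, comm_inv_layer by (auto; apply normal_inv, lcs_comm_r, Ha).
      reflexivity.
Qed.

Lemma layer_rep_lcs (l : list G) : (forall g, gen (fun y => In y l) g) ->
  forall z, lcs (S j) z -> layer_rep l z.
Proof.
  intros Hl. apply gen_ind; auto using layer_rep_one, layer_rep_mul, layer_rep_inv.
  intros x [a [g [Ha ->]]]. rewrite <- comm_inv.
  apply layer_rep_cong with (comm g (a^-1)).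
  - apply layer_rep_comm; auto. now apply normal_inv.
  - symmetry. now apply comm_inv_layer.
Qed.

End Layer.

(** A finitely generated nilpotent group has a derived subgroup of finite
    width: descending the lower central series one layer at a time, every
    element of [G'] is a product of [c * n] commutators, where [c] is the
    nilpotency class and [n] the number of generators. *)
Lemma derived_finite_width {G : Group} : finitely_generated G -> nilpotent G ->
  exists K, forall z : G, derived z -> Cw K z.
Proof.
  intros [l Hl] [c Hc].
  assert (Htop : forall x : G, lcs (S c) x -> x = gone G).
  { apply gen_ind; auto.
    - intros x [a [g [Ha ->]]]. rewrite (Hc a Ha). apply comm_1l.
    - intros x y -> ->. apply g_1l.
    - intros x ->. apply g_V1. }
  assert (Hdesc : forall m j, S j + m = S c ->
            forall z : G, lcs (S j) z -> Cw (m * length l) z).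
  { induction m as [|m IH]; intros j Hj z Hz.
    - replace j with c in Hz by lia. rewrite (Htop z Hz). apply Cw_one.
    - destruct (layer_rep_lcs j l Hl z Hz) as [u [Hu Hw]].
      replace z with (layer_prod l u ** ((layer_prod l u)^-1 ** z)) by (gs; reflexivity).
      replace (S m * length l) with (length l + m * length l) by lia.
      apply Cw_mul; [apply layer_prod_Cw|]. apply (IH (S j)); [lia | exact Hw]. }
  exists (c * length l). intros z Hz. apply (Hdesc c 0); [lia|]. now apply derived_lcs1.
Qed.

Section Powers.
Context {G : Group}.

Lemma gpow_add (x : G) m n : gpow x (m + n) = gpow x m ** gpow x n.
Proof. induction m; simpl; [|rewrite IHm]; gs; reflexivity. Qed.

Lemma gpow_mul (x : G) m n : gpow x (m * n) = gpow (gpow x m) n.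
Proof.
  revert m. induction n; intro m; simpl; [now rewrite Nat.mul_0_r|].
  now rewrite Nat.mul_succ_r, Nat.add_comm, gpow_add, IHn.
Qed.

Lemma gpow_comm (x : G) m n : gpow (gpow x m) n = gpow (gpow x n) m.
Proof. now rewrite <- !gpow_mul, Nat.mul_comm. Qed.

Lemma gpow_one n : gpow (gone G) n = gone G.
Proof. induction n; simpl; auto. rewrite IHn. apply g_1l. Qed.

Lemma gpow_gen S (x : G) n : gen S x -> gen S (gpow x n).
Proof. intro H. induction n; simpl; [apply gen_one | now apply gen_mul]. Qed.

#[global] Instance gpow_cong (P : G -> Prop) `{normal G P} :
  Proper (cong P ==> eq ==> cong P) gpow.
Proof.
  intros x y Hxy k k' <-. induction k; simpl; [reflexivity | now apply gmul_cong].
Qed.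

End Powers.

Section PowerBound.
Context {G : Group}.
Notation D := (@derived G).
Notation "x ~ y" := (cong D x y) (at level 70).
Notation gen_by l := (gen (fun y => In y l)).

Lemma ab_comm (x y : G) : x ** y ~ y ** x.
Proof. apply cong_swap. apply gen_base. eauto. Qed.

Lemma ab_interchange (x y z w : G) : x ** y ** (z ** w) ~ x ** z ** (y ** w).
Proof.
  rewrite !g_assoc. apply gmul_cong; [reflexivity|].
  rewrite <- !g_assoc. now rewrite (ab_comm y z).
Qed.

Lemma ab_pow_mul (x y : G) k : gpow (x ** y) k ~ gpow x k ** gpow y k.
Proof.
  induction k; simpl; [gs; reflexivity|]. now rewrite IHk, ab_interchange.
Qed.

Definition torsion_bound (l : list G) (e : nat) : Prop :=
  1 <= e /\ forall x, gen_by l x -> forall k, 1 <= k -> D (gpow x k) -> D (gpow x e).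

Lemma ab_normal_form (a : G) l x : gen_by (a :: l) x ->
  exists m1 m2 b, gen_by l b /\ x ** gpow a m2 ~ gpow a m1 ** b.
Proof.
  induction 1 as [y Hy| |x1 x2 _ [m1 [m2 [b [Hb H1]]]] _ [n1 [n2 [c [Hc H2]]]]
                 |y _ [m1 [m2 [b [Hb H]]]]].
  - destruct Hy as [<-|Hy].
    + exists 1, 0, (gone G). split; [apply gen_one|]. simpl. gs. reflexivity.
    + exists 0, 0, y. split; [now apply gen_base|]. simpl. gs. reflexivity.
  - exists 0, 0, (gone G). split; [apply gen_one|]. simpl. gs. reflexivity.
  - exists (m1 + n1), (m2 + n2), (b ** c). split; [now apply gen_mul|].
    rewrite !gpow_add, ab_interchange, H1, H2. apply ab_interchange.
  - exists m2, m1, (b^-1). split; [now apply gen_inv|].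
    transitivity (y^-1 ** (gpow a m1 ** b) ** b^-1); [gs; reflexivity|].
    rewrite <- H. gs. reflexivity.
Qed.

Lemma ab_power_free (a : G) l p q w :
  (forall d c, 1 <= d -> gen_by l c -> ~ gpow a d ~ c) ->
  gen_by l w -> gpow a p ~ gpow a q ** w -> p = q.
Proof.
  intros Hfree Hw H. destruct (lt_eq_lt_dec p q) as [[Hlt|Heq]|Hgt]; auto; exfalso.
  - apply (Hfree (q - p) (w^-1)); [lia | now apply gen_inv|].
    apply cong_cancel_l with (gpow a p). rewrite <- gpow_add, H.
    replace (p + (q - p)) with q by lia. gs. reflexivity.
  - apply (Hfree (p - q) w); [lia | exact Hw|].
    apply cong_cancel_l with (gpow a q). rewrite <- gpow_add.
    replace (q + (p - q)) with p by lia. now rewrite H.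
Qed.

Lemma torsion_bound_free (a : G) l e :
  (forall d c, 1 <= d -> gen_by l c -> ~ gpow a d ~ c) ->
  torsion_bound l e -> torsion_bound (a :: l) e.
Proof.
  intros Hfree [He IH]. split; auto. intros x Hx k Hk Hxk.
  destruct (ab_normal_form a l x Hx) as [m1 [m2 [b [Hb H]]]].
  assert (Hpow : gpow a (m2 * k) ~ gpow a (m1 * k) ** gpow b k).
  { rewrite !gpow_mul, <- ab_pow_mul, <- H, ab_pow_mul.
    rewrite (proj2 (cong_one _) Hxk). gs. reflexivity. }
  apply (ab_power_free a l) in Hpow; [|exact Hfree | now apply gpow_gen].
  assert (Hm : m1 = m2) by nia. subst m2.
  assert (Hxb : x ~ b) by (apply cong_cancel_r with (gpow a m1); now rewrite H, ab_comm).
  rewrite Hxb. apply (IH b Hb k Hk). now rewrite <- Hxb.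
Qed.

(** Extension step when [a^d] is congruent to some [c] in [<l>]: then [x^d]
    is congruent to an element of [<l>] for every [x] in [<a, l>]. *)
Lemma torsion_bound_power (a : G) l e d c :
  1 <= d -> gen_by l c -> gpow a d ~ c ->
  torsion_bound l e -> torsion_bound (a :: l) (d * e).
Proof.
  intros Hd Hc Hac [He IH]. split; [lia|]. intros x Hx k Hk Hxk.
  destruct (ab_normal_form a l x Hx) as [m1 [m2 [b [Hb H]]]].
  set (y := gpow c m1 ** gpow b d ** (gpow c m2)^-1).
  assert (Hy : gen_by l y).
  { apply gen_mul; [apply gen_mul|apply gen_inv]; now apply gpow_gen. }
  assert (Hxy : gpow x d ~ y).
  { apply cong_cancel_r with (gpow c m2). unfold y. gs.
    rewrite <- !Hac, !(gpow_comm a d), <- ab_pow_mul, H, ab_pow_mul. reflexivity. }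
  rewrite gpow_mul, Hxy.
  apply (IH y Hy k Hk). rewrite <- Hxy, gpow_comm.
  apply cong_one. rewrite (proj2 (cong_one _) Hxk), gpow_one. reflexivity.
Qed.

Lemma torsion_bound_exists (l : list G) : exists e, torsion_bound l e.
Proof.
  induction l as [|a l [e IH]].
  - exists 1. split; auto. intros x Hx k _ _.
    assert (Hx1 : x = gone G).
    { induction Hx as [y []| |y z _ -> _ ->|y _ ->]; gs; reflexivity. }
    rewrite Hx1, gpow_one. apply normal_one.
  - destruct (classic (exists d c, 1 <= d /\ gen_by l c /\ gpow a d ~ c))
      as [[d [c [Hd [Hc Hac]]]]|Hfree].
    + exists (d * e). now apply torsion_bound_power with c.
    + exists e. apply torsion_bound_free; auto.
      intros d c Hd Hc Hac. apply Hfree. eauto.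
Qed.

End PowerBound.

Definition tcomm (a b : term) : term := tmul (tmul (tinv a) (tinv b)) (tmul a b).

Fixpoint tpow (t : term) (n : nat) : term :=
  match n with 0 => tone | S m => tmul t (tpow t m) end.

Lemma teval_pow (G : Group) env t n : teval G env (tpow t n) = gpow (teval G env t) n.
Proof. induction n; simpl; auto. now rewrite IHn. Qed.

Lemma tfree_pow n t k : tfree n (tpow t k) = true -> tfree n t = true.
Proof. induction k; simpl; [discriminate|]. now intros [H|H]%Bool.orb_true_iff; auto. Qed.

Definition term_below (m : nat) (t : term) : Prop := forall i, m <= i -> tfree i t = false.

Lemma term_below_var m i : i < m -> term_below m (tvar i).
Proof. intros H j Hj. simpl. apply Nat.eqb_neq. lia. Qed.
Lemma term_below_one m : term_below m tone.
Proof. intros j _. reflexivity. Qed.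
Lemma term_below_mul m a b : term_below m a -> term_below m b -> term_below m (tmul a b).
Proof. intros Ha Hb j Hj. simpl. now rewrite Ha, Hb. Qed.
Lemma term_below_inv m a : term_below m a -> term_below m (tinv a).
Proof. intros Ha j Hj. simpl. now rewrite Ha. Qed.
Lemma term_below_comm m a b : term_below m a -> term_below m b -> term_below m (tcomm a b).
Proof. intros. unfold tcomm. auto using term_below_mul, term_below_inv. Qed.
Lemma term_below_pow m a n : term_below m a -> term_below m (tpow a n).
Proof. intros. induction n; simpl; auto using term_below_mul, term_below_one. Qed.
Lemma term_below_S m a : term_below m a -> term_below (S m) a.
Proof. intros H j Hj. apply H. lia. Qed.

#[global] Hint Resolve term_below_one term_below_mul term_below_inv term_below_comm
  term_below_pow term_below_S : term_below.
#[global] Hint Extern 1 (term_below _ (tvar _)) => (apply term_below_var; lia) : term_below.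

Lemma teval_upd (G : Group) env m v t :
  tfree m t = false -> teval G (upd G env m v) t = teval G env t.
Proof.
  induction t; simpl; intro H; auto.
  - unfold upd. now rewrite Nat.eqb_sym, H.
  - apply Bool.orb_false_iff in H as [H1 H2]. now rewrite IHt1, IHt2.
  - now rewrite IHt.
Qed.

(** [cw_form m K t acc] says that [t = acc * [v_m, v_(m+1)] * ... ] with [K]
    commutators of existentially quantified variables [v_m, v_(m+1), ...];
    the variables of [t] and [acc] must lie below [m]. *)
Fixpoint cw_form (m K : nat) (t acc : term) : formula :=
  match K with
  | 0 => fEq t acc
  | S K' => fEx m (fEx (S m)
             (cw_form (S (S m)) K' t (tmul acc (tcomm (tvar m) (tvar (S m))))))
  end.

Lemma sat_cw_form (G : Group) K : forall m t acc env,
  term_below m t -> term_below m acc ->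
  (sat G env (cw_form m K t acc) <->
   exists ps : list (G * G), length ps = K /\
     teval G env t = teval G env acc ** comm_prod ps).
Proof.
  induction K as [|K IH]; intros m t acc env Ht Hacc; cbn [cw_form sat].
  - split.
    + intro E. exists nil. split; auto. simpl. rewrite E. now gs.
    + intros [ps [L E]]. destruct ps; [|discriminate]. rewrite E. simpl. now gs.
  - assert (Hev : forall v w s, term_below m s ->
              teval G (upd G (upd G env m v) (S m) w) s = teval G env s).
    { intros v w s Hs. rewrite !teval_upd by (apply Hs; lia). reflexivity. }
    assert (Hacc' : term_below (S (S m)) (tmul acc (tcomm (tvar m) (tvar (S m)))))
      by auto with term_below.
    assert (Hvw : forall v w, teval G (upd G (upd G env m v) (S m) w)
                    (tcomm (tvar m) (tvar (S m))) = comm v w).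
    { intros v w. unfold upd. simpl. rewrite (proj2 (Nat.eqb_neq m (S m))) by lia.
      now rewrite !Nat.eqb_refl. }
    setoid_rewrite IH; [|auto with term_below ..].
    split.
    + intros [v [w [ps [L E]]]]. exists ((v, w) :: ps). split; [simpl; auto|].
      cbn [teval] in E. rewrite Hev, Hev, Hvw in E by assumption.
      rewrite E. simpl. now gs.
    + intros [[|[v w] ps] [L E]]; [discriminate|]. simpl in L.
      exists v, w, ps. split; [lia|].
      cbn [teval]. rewrite Hev, Hev, Hvw by assumption. rewrite E. simpl. now gs.
Qed.

Lemma free_cw_form K : forall m t acc n,
  free_in n (cw_form m K t acc) = true -> tfree n t = true \/ tfree n acc = true.
Proof.
  induction K as [|K IH]; intros m t acc n H; simpl in H.
  - now apply Bool.orb_true_iff in H.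
  - apply Bool.andb_true_iff in H as [H1 H]. apply Bool.andb_true_iff in H as [H2 H].
    apply IH in H as [H|H]; auto. simpl in H.
    apply Bool.negb_true_iff in H1, H2. rewrite H1, H2 in H.
    now rewrite !Bool.orb_false_r in H; auto.
Qed.

(** [cw_formula K t] expresses [Cw K t] for a term [t] in the variables
    [0] and [1]. *)
Definition cw_formula (K : nat) (t : term) : formula := cw_form 2 K t tone.

Lemma sat_cw_formula (G : Group) K env t :
  term_below 2 t -> (sat G env (cw_formula K t) <-> Cw K (teval G env t)).
Proof.
  intros Ht. unfold cw_formula, Cw. rewrite sat_cw_form by auto with term_below. simpl.
  split; intros [ps [L E]]; exists ps; split; auto; rewrite E; now gs.
Qed.

Lemma free_cw_formula K t n : free_in n (cw_formula K t) = true -> tfree n t = true.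
Proof. intros H. now apply free_cw_form in H as [H|H]. Qed.

Definition forall_close (vs : list nat) (f : formula) : formula := fold_right fAll f vs.

Lemma free_forall_close vs f n :
  free_in n (forall_close vs f) = true -> free_in n f = true /\ ~ In n vs.
Proof.
  induction vs as [|v vs IH]; simpl; [auto|].
  intros [Hv Hf]%Bool.andb_true_iff. apply Bool.negb_true_iff, Nat.eqb_neq in Hv.
  destruct (IH Hf) as [H1 H2]. split; auto. intros [->|]; auto.
Qed.

Lemma upd_same (G : Group) (env : nat -> G) m : upd G env m (env m) = env.
Proof.
  apply functional_extensionality. intro k. unfold upd.
  destruct (Nat.eqb_spec k m); congruence.
Qed.

Lemma sat_forall_close (G : Group) vs f :
  (forall env, sat G env f) <-> (forall env, sat G env (forall_close vs f)).
Proof.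
  induction vs as [|v vs IH]; simpl; [tauto|]. split.
  - intros Hf env x. now apply IH.
  - intros Hc. apply IH. intro env. rewrite <- (upd_same G env v). apply Hc.
Qed.

(** Elementary equivalence transfers the validity of any formula, since its
    universal closure is a sentence. *)
Lemma valid_transfer (G H : Group) (f : formula) (N : nat) :
  elem_equiv G H -> (forall n, free_in n f = true -> n < N) ->
  (forall env, sat G env f) -> forall env, sat H env f.
Proof.
  intros HGH Hfree.
  rewrite (sat_forall_close G (seq 0 N) f), (sat_forall_close H (seq 0 N) f).
  apply HGH.
  intros n. destruct (free_in n _) eqn:E; auto.
  apply free_forall_close in E as [E Hn]. exfalso. apply Hn, in_seq. specialize (Hfree n E). lia.
Qed.

Lemma Cw_mul_closed_transfer (G H : Group) K : elem_equiv G H ->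
  (forall x y : G, Cw K x -> Cw K y -> Cw K (x ** y)) ->
  forall x y : H, Cw K x -> Cw K y -> Cw K (x ** y).
Proof.
  set (f := fImp (cw_formula K (tvar 0))
              (fImp (cw_formula K (tvar 1)) (cw_formula K (tmul (tvar 0) (tvar 1))))).
  assert (Hsat : forall (M : Group) env,
             sat M env f <-> (Cw K (env 0) -> Cw K (env 1) -> Cw K (env 0 ** env 1))).
  { intros M env. unfold f. cbn [sat]. rewrite !sat_cw_formula by auto with term_below.
    reflexivity. }
  intros HGH HG x y. apply (Hsat H (fun n => match n with 0 => x | _ => y end)).
  apply (valid_transfer G H f 2 HGH).
  - intros n Hn. unfold f in Hn. cbn [free_in] in Hn.
    repeat (apply Bool.orb_true_iff in Hn as [Hn|Hn]); apply free_cw_formula in Hn;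
      simpl in Hn; repeat (apply Bool.orb_true_iff in Hn as [Hn|Hn]);
      apply Nat.eqb_eq in Hn; lia.
  - intro env. apply Hsat, HG.
Qed.

Lemma Cw_power_transfer (G H : Group) K k e : elem_equiv G H ->
  (forall x : G, Cw K (gpow x k) -> Cw K (gpow x e)) ->
  forall x : H, Cw K (gpow x k) -> Cw K (gpow x e).
Proof.
  set (f := fImp (cw_formula K (tpow (tvar 0) k)) (cw_formula K (tpow (tvar 0) e))).
  assert (Hsat : forall (M : Group) env,
             sat M env f <-> (Cw K (gpow (env 0) k) -> Cw K (gpow (env 0) e))).
  { intros M env. unfold f. cbn [sat].
    rewrite !sat_cw_formula, !teval_pow by auto with term_below. reflexivity. }
  intros HGH HG x. apply (Hsat H (fun _ => x)).
  apply (valid_transfer G H f 1 HGH).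
  - intros n Hn. unfold f in Hn. cbn [free_in] in Hn.
    apply Bool.orb_true_iff in Hn as [Hn|Hn]; apply free_cw_formula, tfree_pow in Hn;
      apply Nat.eqb_eq in Hn; lia.
  - intro env. apply Hsat, HG.
Qed.

Theorem mainTheorem7 (G : Group) :
  finitely_generated G -> nilpotent G ->
  exists psi : formula,
    unary_formula psi /\
    forall H : Group, elem_equiv G H -> defines H psi (@Is_derived H).
Proof.
  intros Hfg Hnil.
  destruct (derived_finite_width Hfg Hnil) as [K HK].
  destruct Hfg as [l Hl]. destruct (torsion_bound_exists l) as [e [He HE]].
  assert (HDG : forall z : G, derived z <-> Cw (S K) z).
  { intro z. split; [intro Hz; apply Cw_S, HK, Hz | apply Cw_derived]. }
  exists (cw_formula (S K) (tpow (tvar 0) e)). split.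
  { intros n Hn. destruct (free_in n _) eqn:E; auto.
    apply free_cw_formula, tfree_pow, Nat.eqb_eq in E. lia. }
  intros H HGH env.
  assert (HDH : forall z : H, derived z <-> Cw (S K) z).
  { apply derived_Cw_of_mul_closed; [lia|]. apply (Cw_mul_closed_transfer G H _ HGH).
    intros x y. rewrite <- !HDG. apply gen_mul. }
  rewrite sat_cw_formula, teval_pow by auto with term_below. simpl.
  rewrite <- HDH. split; [intro Hd; exists e; auto|].
  intros [k [Hk Hd]]. rewrite HDH in *.
  apply (Cw_power_transfer G H _ k e HGH); auto.
  intros x. rewrite <- !HDG. apply (HE x (Hl x) k Hk).
Qed.
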